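(* Let $n\ge2$, $l\ge1$, $\mathfrak g=C^{(1)}_n$, $B$ the level-$l$ perfect crystal of the context, $\lambda=l\Lambda_0$, $d=2n$, and $i^{(j)}_a=a-1$ for $1\le a\le n+1$, $i^{(j)}_a=2n+1-a$ for $n+2\le a\le 2n$ (all $j\ge1$). Then: (II) $B^{(j)}_d=B$ for all $j\ge1$; (III) $\langle\lambda_j,h_{i^{(j)}_a}\rangle\le\varepsilon_{i^{(j)}_a}(b)$ for all $j\ge1$, $1\le a\le d$, $b\in B^{(j)}_{a-1}$; (IV') for all $j\ge1$, $a=1,\dots,d$: $\varepsilon_{i^{(j)}_{a+1}}(b^{(j)}_a)=0$, $\varphi_{i^{(j)}_{a+1}}(b^{(j)}_a)>0$ (with $i^{(j)}_{d+1}:=i^{(j+1)}_1$), and $b^{(j+1)}_0=\tilde f_{i^{(j+1)}_1}^mb^{(j)}_d$ with $m=\langle\lambda_{j+1},h_{i^{(j+1)}_1}\rangle$. Moreover $B^{(j)}_0=\{(0,\dots,0)\}$, $B^{(j)}_{2n}=B$; for $1\le a\le n$, $B^{(j)}_a$ is the set of $b\in B$ with all coordinates $0$ except possibly $x_1,\dots,x_a$; for $1\le a\le n-1$, $B^{(j)}_{n+a}$ is the set of $b\in B$ with all coordinates $0$ except possibly $x_1,\dots,x_n,\bar x_n,\dots,\bar x_{n-a+1}$. Also $b^{(j)}_0=(0,\dots,0)$, and for $1\le a\le n$, $b^{(j)}_a$ has $x_a=2l$ and $b^{(j)}_{n+a}$ has $\bar x_{n-a+1}=2l$, all other coordinates 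$0$.
   Context: $(x)_+=\max(x,0)$. $B=\{(x_1,\dots,x_n,\bar x_n,\dots,\bar x_1)\in\mathbb Z^{2n}: x_i,\bar x_i\ge0,\ \sum_{i=1}^n(x_i+\bar x_i)\le 2l,\ \sum_{i=1}^n(x_i+\bar x_i)\in2\mathbb Z\}$. Crystal structure: $\tilde f_0b=(x_1+2,x_2,\dots,\bar x_2,\bar x_1)$ if $x_1\ge\bar x_1$, $(x_1+1,x_2,\dots,\bar x_2,\bar x_1-1)$ if $x_1=\bar x_1-1$, $(x_1,x_2,\dots,\bar x_2,\bar x_1-2)$ if $x_1\le\bar x_1-2$; for $1\le i\le n-1$, $\tilde f_ib$ replaces $(x_i,x_{i+1})$ by $(x_i-1,x_{i+1}+1)$ if $x_{i+1}\ge\bar x_{i+1}$, and $(\bar x_{i+1},\bar x_i)$ by $(\bar x_{i+1}-1,\bar x_i+1)$ if $x_{i+1}<\bar x_{i+1}$; $\tilde f_nb$ replaces $(x_n,\bar x_n)$ by $(x_n-1,\bar x_n+1)$; $\tilde e_ib=b'$ iff $\tilde f_ib'=b$; results outside $B$ mean $0$. With $s(b)=\sum_{i=1}^n(x_i+\bar x_i)$: $\varphi_0(b)=l-\tfrac12s(b)+(\bar x_1-x_1)_+$, $\varepsilon_0(b)=l-\tfrac12 s(b)+(x_1-\bar x_1)_+$; $\varphi_i(b)=x_i+(\bar x_{i+1}-x_{i+1})_+$, $\varepsilon_i(b)=\bar x_i+(x_{i+1}-\bar x_{i+1})_+$ ($1\le i\le n-1$); $\varphi_n(b)=x_n$, $\varepsilon_n(b)=\bar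 x_n$. For $\lambda=l\Lambda_0$: $\lambda_j=l\Lambda_0$ and $\overline b_j=(0,\dots,0)$ for all $j$; $\langle\lambda_j,h_i\rangle$ is the coefficient of $\Lambda_i$ in $\lambda_j$. Given $d$, $i^{(j)}_a$: $B^{(j)}_0=\{\overline b_j\}$, $B^{(j)}_a=\bigcup_{n\ge0}\tilde f_{i^{(j)}_a}^nB^{(j)}_{a-1}\setminus\{0\}$; $b^{(j)}_0=\overline b_j$, $b^{(j)}_a=\tilde f_{i^{(j)}_a}^{\varphi_{i^{(j)}_a}(b^{(j)}_{a-1})}b^{(j)}_{a-1}$. *)

From mathcomp Require Import all_boot all_order all_algebra.
Set Implicit Arguments. Unset Strict Implicit. Unset Printing Implicit Defensive.
Import Order.TTheory GRing.Theory Num.Theory.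
Local Open Scope ring_scope.

(* An element (x_1..x_n, xbar_n..xbar_1) is encoded as the pair
   (x, xb) with x`_(i-1) = x_i and xb`_(i-1) = xbar_i. *)
Definition vec := (seq int * seq int)%type.

Definition getx (b : vec) (i : nat) : int := nth 0 b.1 i.-1.
Definition getxb (b : vec) (i : nat) : int := nth 0 b.2 i.-1.
Definition upd1 (s : seq int) (i : nat) (v : int) : seq int := set_nth 0 s i.-1 v.

Definition ssum (b : vec) : int := \sum_(v <- b.1 ++ b.2) v.

Definition inB (n l : nat) (b : vec) : bool :=
  [&& size b.1 == n, size b.2 == n, all (fun v : int => 0 <= v) (b.1 ++ b.2),
      ssum b <= 2 * (l%:Z) & ~~ odd (absz (ssum b))].

Definition zerov (n : nat) : vec := (nseq n 0, nseq n 0).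

Definition pos (x : int) : int := Num.max x 0.

(* raw action of f_i (before checking the result lies in B) *)
Definition f_raw (n : nat) (i : nat) (b : vec) : vec :=
  if i == 0%N then
    let x1 := getx b 1 in let y1 := getxb b 1 in
    if y1 <= x1 then (upd1 b.1 1 (x1 + 2), b.2)
    else if x1 == y1 - 1 then (upd1 b.1 1 (x1 + 1), upd1 b.2 1 (y1 - 1))
    else (b.1, upd1 b.2 1 (y1 - 2))
  else if (i < n)%N then
    if getxb b i.+1 <= getx b i.+1 then
      (upd1 (upd1 b.1 i (getx b i - 1)) i.+1 (getx b i.+1 + 1), b.2)
    else (b.1, upd1 (upd1 b.2 i.+1 (getxb b i.+1 - 1)) i (getxb b i + 1))
  else (upd1 b.1 n (getx b n - 1), upd1 b.2 n (getxb b n + 1)).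

(* Kashiwara operator f_i; None stands for 0 *)
Definition fcr (n l : nat) (i : nat) (b : vec) : option vec :=
  let b' := f_raw n i b in
  if (i <= n)%N && inB n l b' then Some b' else None.

Definition iterf (n l i k : nat) (b : vec) : option vec :=
  iter k (obind (fcr n l i)) (Some b).

Definition eps (n l : nat) (i : nat) (b : vec) : int :=
  if i == 0%N then l%:Z - (ssum b %/ 2)%Z + pos (getx b 1 - getxb b 1)
  else if (i < n)%N then getxb b i + pos (getx b i.+1 - getxb b i.+1)
  else getxb b n.

Definition phi (n l : nat) (i : nat) (b : vec) : int :=
  if i == 0%N then l%:Z - (ssum b %/ 2)%Z + pos (getxb b 1 - getx b 1)
  else if (i < n)%N then getx b i + pos (getxb b i.+1 - getx b i.+1)
  else getx b n.

(* <lambda_j, h_i> for lambda_j = l Lambda_0 *)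
Definition lam_h (l j i : nat) : nat := if i == 0%N then l else 0%N.

Definition idx (n j a : nat) : nat := if (a <= n.+1)%N then a.-1 else ((2 * n).+1 - a)%N.

Fixpoint Bset (n l j a : nat) : vec -> Prop :=
  match a with
  | 0 => fun b => b = zerov n
  | a'.+1 => fun b => exists b0 k, Bset n l j a' b0 /\ iterf n l (idx n j a) k b0 = Some b
  end.

Fixpoint bseqc (n l j a : nat) : option vec :=
  match a with
  | 0 => Some (zerov n)
  | a'.+1 => obind (fun b => iterf n l (idx n j a) (absz (phi n l (idx n j a) b)) b)
                   (bseqc n l j a')
  end.

(** Each operator of the string f_0, f_1, ..., f_n, f_(n-1), ..., f_1 only shifts mass
    between neighbouring coordinates: f_0 adds 2 to x_1 (while x_1 >= xbar_1), f_i moves a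
    unit from x_i to x_(i+1) or from xbar_(i+1) to xbar_i, and f_n from x_n to xbar_n.  So
    B_a is B_(a-1) with one more coordinate freed: an element using the new coordinate is
    reached by f_i from the element of B_(a-1) in which that mass has been collected into
    the neighbouring coordinate.  Applied maximally to b_(a-1), f_i moves all of its mass
    2l one coordinate further, so the b_a are the vectors 2l e_a, at which eps and phi of
    the next operator are 0 and 2l. *)

From mathcomp Require Import all_boot all_order all_algebra zify.
Import Order.TTheory GRing.Theory Num.Theory.
Local Open Scope ring_scope.
Set Implicit Arguments.
Unset Strict Implicit.

Ltac coord_cases := rewrite /=; repeat (case: eqP => ?; subst); lia.

Section Coordinates.

Variable n : nat.

(* The element with 1-indexed coordinate functions [X] and [Y]; only their values on
   [1..n] matter. *)
Definition mkvec (X Y : nat -> int) : vec :=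
  (mkseq (X \o succn) n, mkseq (Y \o succn) n).

Lemma getx_mkvec X Y k : (1 <= k <= n)%N -> getx (mkvec X Y) k = X k.
Proof. by case: k => // k /= hk; rewrite /getx nth_mkseq. Qed.

Lemma getxb_mkvec X Y k : (1 <= k <= n)%N -> getxb (mkvec X Y) k = Y k.
Proof. by case: k => // k /= hk; rewrite /getxb nth_mkseq. Qed.

Lemma eq_mkvec X Y X' Y' :
  (forall k, (1 <= k <= n)%N -> X k = X' k) ->
  (forall k, (1 <= k <= n)%N -> Y k = Y' k) -> mkvec X Y = mkvec X' Y'.
Proof.
move=> eqX eqY; congr pair; apply/eq_in_map => k; rewrite mem_iota /= => hk.
  exact: eqX.
exact: eqY.
Qed.

Lemma mkseq0 : mkseq ((fun=> 0) \o succn) n = nseq n (0 : int).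
Proof.
by apply: (@eq_from_nth _ 0); rewrite ?size_nseq ?size_mkseq // => k hk;
  rewrite nth_nseq nth_mkseq ?hk.
Qed.

Lemma zerov_mkvec : zerov n = mkvec (fun=> 0) (fun=> 0).
Proof. by rewrite /mkvec mkseq0. Qed.

Lemma upd1_mkseq (X : nat -> int) i v : (1 <= i <= n)%N ->
  upd1 (mkseq (X \o succn) n) i v = mkseq ([eta X with i |-> v] \o succn) n.
Proof.
case: i => // i hi; apply: (@eq_from_nth _ 0); rewrite /upd1 size_set_nth !size_mkseq.
  lia.
move=> k hk; have {}hk : (k < n)%N by lia.
by rewrite nth_set_nth /= !nth_mkseq.
Qed.

Lemma ssum_mkvec X Y :
  ssum (mkvec X Y) = \sum_(1 <= k < n.+1) X k + \sum_(1 <= k < n.+1) Y k.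
Proof. by rewrite /ssum big_cat /= !big_map !big_add1 /index_iota !subn0. Qed.

Lemma sum_eta_update (F : nat -> int) i v : (1 <= i <= n)%N ->
  \sum_(1 <= k < n.+1) [eta F with i |-> v] k = \sum_(1 <= k < n.+1) F k + (v - F i).
Proof.
move=> hi; have -> : v - F i = \sum_(1 <= k < n.+1 | k == i) (v - F i).
  by rewrite big_nat1_eq ltnS hi.
rewrite [X in _ + X]big_mkcond -big_split /=; apply: eq_bigr => k _; case: eqP => [->|_]; lia.
Qed.

Lemma ssum_mkvec_updx X Y i v : (1 <= i <= n)%N ->
  ssum (mkvec [eta X with i |-> v] Y) = ssum (mkvec X Y) + (v - X i).
Proof. by move=> hi; rewrite !ssum_mkvec sum_eta_update // addrAC addrA. Qed.

Lemma ssum_mkvec_updxb X Y i v : (1 <= i <= n)%N ->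
  ssum (mkvec X [eta Y with i |-> v]) = ssum (mkvec X Y) + (v - Y i).
Proof. by move=> hi; rewrite !ssum_mkvec sum_eta_update // addrA. Qed.

Lemma ssum_zerov : ssum (zerov n) = 0.
Proof. by rewrite zerov_mkvec ssum_mkvec !big1_eq. Qed.

Lemma inB_mkvec l X Y : inB n l (mkvec X Y) <->
  [/\ forall k, (1 <= k <= n)%N -> 0 <= X k /\ 0 <= Y k,
      ssum (mkvec X Y) <= 2 * l%:Z & ~~ odd (absz (ssum (mkvec X Y)))].
Proof.
rewrite /inB /= !size_mkseq eqxx all_cat !all_map /=; split.
  case/and3P=> /andP[/allP nX /allP nY] -> ->; split=> // k hk.
  have kn : (k.-1 \in iota 0 n) by rewrite mem_iota; lia.
  by have := nX _ kn; have := nY _ kn; case: k hk {kn}.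
case=> nonneg -> ->; rewrite !andbT; apply/andP; split; apply/allP => k /=;
  rewrite mem_iota => hk; have [] := nonneg k.+1; lia.
Qed.

Lemma inB_mkvec_getx l b : inB n l b -> b = mkvec (getx b) (getxb b).
Proof.
case: b => x y /and3P[/eqP sx /eqP sy _] /=; congr pair; apply: (@eq_from_nth _ 0);
  rewrite ?size_mkseq // => k hk; rewrite nth_mkseq //; [by rewrite -sx | by rewrite -sy].
Qed.

Lemma inB_mkvec_ge0 l X Y k : inB n l (mkvec X Y) -> (1 <= k <= n)%N ->
  0 <= X k /\ 0 <= Y k.
Proof. by case/inB_mkvec=> nonneg _ _; apply: nonneg. Qed.

Lemma inB_ge0 l b k : inB n l b -> (1 <= k <= n)%N -> 0 <= getx b k /\ 0 <= getxb b k.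
Proof. by move=> bB; have := bB; rewrite {1}(inB_mkvec_getx bB); exact: inB_mkvec_ge0. Qed.

Lemma inB_ssum l b : inB n l b -> ssum b <= 2 * l%:Z /\ ~~ odd (absz (ssum b)).
Proof. by case/and5P=> _ _ _ -> ->. Qed.

Lemma inB_zerov l : inB n l (zerov n).
Proof. by rewrite zerov_mkvec; apply/inB_mkvec; rewrite -zerov_mkvec ssum_zerov. Qed.

Lemma inB_mkvec_shift l X Y X' Y' (c : int) : inB n l (mkvec X Y) ->
  (forall k, (1 <= k <= n)%N -> 0 <= X' k /\ 0 <= Y' k) ->
  ssum (mkvec X' Y') = ssum (mkvec X Y) + 2 * c ->
  ssum (mkvec X' Y') <= 2 * l%:Z -> inB n l (mkvec X' Y').
Proof.
case/inB_mkvec=> _ _ even nonneg' hs bound; apply/inB_mkvec; split=> //.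
by move: even; rewrite hs; lia.
Qed.

Lemma inB_mkvec_transfer l X Y X' Y' : inB n l (mkvec X Y) ->
  (forall k, (1 <= k <= n)%N -> 0 <= X' k /\ 0 <= Y' k) ->
  ssum (mkvec X' Y') = ssum (mkvec X Y) -> inB n l (mkvec X' Y').
Proof.
move=> hb nonneg' hs; apply: (inB_mkvec_shift (c := 0) hb) => //; first by rewrite hs; lia.
by case/inB_mkvec: hb; rewrite hs.
Qed.

End Coordinates.

Section Operators.

Variables n l : nat.
Hypothesis n_gt0 : (0 < n)%N.

Lemma f_raw0_up X Y : Y 1%N <= X 1%N ->
  f_raw n 0 (mkvec n X Y) = mkvec n [eta X with 1%N |-> X 1%N + 2] Y.
Proof.
move=> hXY; rewrite /f_raw /= getx_mkvec ?getxb_mkvec ?hXY //.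
by rewrite upd1_mkseq.
Qed.

Lemma f_raw0_down X Y : X 1%N + 2 <= Y 1%N ->
  f_raw n 0 (mkvec n X Y) = mkvec n X [eta Y with 1%N |-> Y 1%N - 2].
Proof.
move=> hXY; rewrite /f_raw /= getx_mkvec ?getxb_mkvec //.
have -> : (Y 1%N <= X 1%N) = false by lia.
have -> : (X 1%N == Y 1%N - 1) = false by lia.
by rewrite upd1_mkseq.
Qed.

Lemma f_raw_x i X Y : (1 <= i < n)%N -> Y i.+1 <= X i.+1 ->
  f_raw n i (mkvec n X Y) = mkvec n [eta X with i.+1 |-> X i.+1 + 1, i |-> X i - 1] Y.
Proof.
move=> hi hXY; rewrite /f_raw; have -> : (i == 0%N) = false by lia.
rewrite ifT; last lia.
by rewrite !getx_mkvec ?getxb_mkvec ?hXY ?upd1_mkseq //; lia.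
Qed.

Lemma f_raw_xb i X Y : (1 <= i < n)%N -> X i.+1 < Y i.+1 ->
  f_raw n i (mkvec n X Y) = mkvec n X [eta Y with i |-> Y i + 1, i.+1 |-> Y i.+1 - 1].
Proof.
move=> hi hXY; rewrite /f_raw; have -> : (i == 0%N) = false by lia.
rewrite ifT; last lia.
rewrite !getx_mkvec ?getxb_mkvec; try lia.
have -> : (Y i.+1 <= X i.+1) = false by lia.
by rewrite !upd1_mkseq //; lia.
Qed.

Lemma f_raw_n X Y :
  f_raw n n (mkvec n X Y) = mkvec n [eta X with n |-> X n - 1] [eta Y with n |-> Y n + 1].
Proof.
rewrite /f_raw ltnn; have -> : (n == 0%N) = false by lia.
by rewrite getx_mkvec ?getxb_mkvec ?upd1_mkseq //; lia.
Qed.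

Lemma fcr_some i c c' : fcr n l i c = Some c' -> c' = f_raw n i c /\ inB n l c'.
Proof. by rewrite /fcr; case: ifP => // /andP[_ ?] [<-]. Qed.

Lemma iterfS i t b : iterf n l i t.+1 b = obind (fcr n l i) (iterf n l i t b).
Proof. by []. Qed.

Lemma iterfD i s t b : iterf n l i (s + t) b = obind (iterf n l i s) (iterf n l i t b).
Proof.
rewrite /iterf iterD; case: (iter t _ _) => //=.
by elim: s => //= s ->.
Qed.

Lemma iterf_ind i (P : vec -> Prop) t b b' :
  (forall c c', P c -> fcr n l i c = Some c' -> P c') -> P b ->
  iterf n l i t b = Some b' -> P b'.
Proof.
move=> stepP Pb; elim: t b' => [|t IH] b'; first by case=> <-.
rewrite iterfS; case E: (iterf _ _ _ t b) => [c|] //= hc.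
exact: stepP (IH c E) hc.
Qed.

Lemma iterf_inB i t b b' : inB n l b -> iterf n l i t b = Some b' -> inB n l b'.
Proof.
by apply: (iterf_ind (P := inB n l)) => c c' _ /fcr_some[].
Qed.

Lemma iterf_path i (g : nat -> vec) t : (i <= n)%N ->
  (forall s, (s < t)%N -> f_raw n i (g s) = g s.+1 /\ inB n l (g s.+1)) ->
  iterf n l i t (g 0%N) = Some (g t).
Proof.
move=> hi; elim: t => [|t IH] step //.
rewrite iterfS IH => [|s hs]; last by apply: step; lia.
by have [/= E gt] := step t (ltnSn t); rewrite /fcr E hi gt.
Qed.

Lemma iterf0_up X Y t : inB n l (mkvec n X Y) -> Y 1%N <= X 1%N ->
  ssum (mkvec n X Y) + 2 * t%:Z <= 2 * l%:Z ->
  iterf n l 0 t (mkvec n X Y) = Some (mkvec n [eta X with 1%N |-> X 1%N + 2 * t%:Z] Y).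
Proof.
move=> hb hYX bound; move/inB_mkvec: (hb) => -[nonneg _ _].
pose g s := mkvec n [eta X with 1%N |-> X 1%N + 2 * s%:Z] Y.
have -> : mkvec n X Y = g 0%N by apply: eq_mkvec => k hk; coord_cases.
apply: (iterf_path (g := g)) => // s hs; split.
  rewrite f_raw0_up //=; last lia.
  by apply: eq_mkvec => k hk; coord_cases.
apply: (inB_mkvec_shift (c := s.+1%:Z) hb).
- by move=> k hk; have := nonneg k hk; coord_cases.
- by rewrite ssum_mkvec_updx //=; lia.
- by rewrite ssum_mkvec_updx //=; lia.
Qed.

Lemma iterf0_down X Y t : inB n l (mkvec n X Y) -> X 1%N + 2 * t%:Z <= Y 1%N ->
  iterf n l 0 t (mkvec n X Y) = Some (mkvec n X [eta Y with 1%N |-> Y 1%N - 2 * t%:Z]).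
Proof.
move=> hb hXY; move/inB_mkvec: (hb) => -[nonneg bound _].
pose g s := mkvec n X [eta Y with 1%N |-> Y 1%N - 2 * s%:Z].
have -> : mkvec n X Y = g 0%N by apply: eq_mkvec => k hk; coord_cases.
apply: (iterf_path (g := g)) => // s hs; split.
  rewrite f_raw0_down //=; last lia.
  by apply: eq_mkvec => k hk; coord_cases.
apply: (inB_mkvec_shift (c := - s.+1%:Z) hb).
- by move=> k hk; have := nonneg k hk; coord_cases.
- by rewrite ssum_mkvec_updxb //=; lia.
- by rewrite ssum_mkvec_updxb //=; lia.
Qed.

Lemma iterf_x i X Y t : (1 <= i < n)%N -> inB n l (mkvec n X Y) ->
  t%:Z <= X i -> ((0 < t)%N -> Y i.+1 <= X i.+1) ->
  iterf n l i t (mkvec n X Y) =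
  Some (mkvec n [eta X with i.+1 |-> X i.+1 + t%:Z, i |-> X i - t%:Z] Y).
Proof.
move=> hi hb ht hYX; move/inB_mkvec: (hb) => -[nonneg _ _].
pose g s := mkvec n [eta X with i.+1 |-> X i.+1 + s%:Z, i |-> X i - s%:Z] Y.
have -> : mkvec n X Y = g 0%N by apply: eq_mkvec => k hk; coord_cases.
apply: (iterf_path (g := g)); first lia; move=> s hs; split.
  rewrite f_raw_x //=; last by coord_cases.
  by apply: eq_mkvec => k hk; coord_cases.
apply: (inB_mkvec_transfer hb).
- by move=> k hk; have := nonneg k hk; have := nonneg i; have := nonneg i.+1; coord_cases.
- by rewrite !ssum_mkvec_updx /=; coord_cases.
Qed.

Lemma iterf_xb i X Y t : (1 <= i < n)%N -> inB n l (mkvec n X Y) ->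
  X i.+1 + t%:Z <= Y i.+1 ->
  iterf n l i t (mkvec n X Y) =
  Some (mkvec n X [eta Y with i |-> Y i + t%:Z, i.+1 |-> Y i.+1 - t%:Z]).
Proof.
move=> hi hb hXY; move/inB_mkvec: (hb) => -[nonneg _ _].
pose g s := mkvec n X [eta Y with i |-> Y i + s%:Z, i.+1 |-> Y i.+1 - s%:Z].
have -> : mkvec n X Y = g 0%N by apply: eq_mkvec => k hk; coord_cases.
apply: (iterf_path (g := g)); first lia; move=> s hs; split.
  rewrite f_raw_xb //=; last by coord_cases.
  by apply: eq_mkvec => k hk; coord_cases.
apply: (inB_mkvec_transfer hb).
- by move=> k hk; have := nonneg k hk; have := nonneg i; have := nonneg i.+1; coord_cases.
- by rewrite !ssum_mkvec_updxb /=; coord_cases.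
Qed.

Lemma iterf_n X Y t : inB n l (mkvec n X Y) -> t%:Z <= X n ->
  iterf n l n t (mkvec n X Y) =
  Some (mkvec n [eta X with n |-> X n - t%:Z] [eta Y with n |-> Y n + t%:Z]).
Proof.
move=> hb ht; move/inB_mkvec: (hb) => -[nonneg _ _].
pose g s := mkvec n [eta X with n |-> X n - s%:Z] [eta Y with n |-> Y n + s%:Z].
have -> : mkvec n X Y = g 0%N by apply: eq_mkvec => k hk; coord_cases.
apply: (iterf_path (g := g)) => // s hs; split.
  by rewrite f_raw_n //=; apply: eq_mkvec => k hk; coord_cases.
apply: (inB_mkvec_transfer hb).
- by move=> k hk; have := nonneg k hk; have := nonneg n; coord_cases.
- by rewrite ssum_mkvec_updx ?ssum_mkvec_updxb /=; coord_cases.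
Qed.

End Operators.

Lemma idx_lo n j a : (1 <= a <= n.+1)%N -> idx n j a = a.-1.
Proof. by rewrite /idx => /andP[_ ->]. Qed.

Lemma idx_hi n j a : (n.+1 < a)%N -> idx n j a = ((2 * n).+1 - a)%N.
Proof. by rewrite /idx ltnNge => /negbTE ->. Qed.

Section BSets.

Variables n l j : nat.
Hypothesis n_gt0 : (0 < n)%N.

Definition Bx a b := inB n l b /\
  (forall i, (a < i <= n)%N -> getx b i = 0) /\ (forall i, (1 <= i <= n)%N -> getxb b i = 0).

Definition Bxb a b := inB n l b /\ (forall i, (1 <= i <= n - a)%N -> getxb b i = 0).

Lemma Bx_mkvec a X Y : Bx a (mkvec n X Y) <-> inB n l (mkvec n X Y) /\
  (forall i, (a < i <= n)%N -> X i = 0) /\ (forall i, (1 <= i <= n)%N -> Y i = 0).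
Proof.
split=> -[bB [bX bY]]; split=> //; split=> i hi.
- by rewrite -(@getx_mkvec n X Y) ?bX //; lia.
- by rewrite -(@getxb_mkvec n X Y) ?bY //; lia.
- by rewrite getx_mkvec ?bX //; lia.
- by rewrite getxb_mkvec ?bY //; lia.
Qed.

Lemma Bxb_mkvec a X Y : Bxb a (mkvec n X Y) <-> inB n l (mkvec n X Y) /\
  (forall i, (1 <= i <= n - a)%N -> Y i = 0).
Proof.
split=> -[bB bY]; split=> // i hi.
- by rewrite -(@getxb_mkvec n X Y) ?bY //; lia.
- by rewrite getxb_mkvec ?bY //; lia.
Qed.

Lemma Bset_succ a (P Q : vec -> Prop) :
  (forall b, Bset n l j a b <-> P b) -> (forall b, Q b -> inB n l b) -> (forall b, P b -> Q b) ->
  (forall X Y c, Q (mkvec n X Y) -> fcr n l (idx n j a.+1) (mkvec n X Y) = Some c -> Q c) ->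
  (forall X Y, Q (mkvec n X Y) ->
     exists b0 k, P b0 /\ iterf n l (idx n j a.+1) k b0 = Some (mkvec n X Y)) ->
  forall b, Bset n l j a.+1 b <-> Q b.
Proof.
move=> BP QB PQ Qstep Qgen b /=; split; last first.
  move=> Qb; have b_eq := inB_mkvec_getx (QB _ Qb); move: Qb; rewrite b_eq.
  by case/Qgen=> b0 [k [/BP ? ?]]; exists b0, k.
case=> b0 [k [/BP /PQ Qb0]]; apply: iterf_ind Qb0 => c c' Qc.
by have c_eq := inB_mkvec_getx (QB _ Qc); move: Qc; rewrite c_eq; apply: Qstep.
Qed.

Lemma Bset_one b : Bset n l j 1 b <-> Bx 1 b.
Proof.
apply: (Bset_succ (P := eq^~ (zerov n))); rewrite ?idx_lo //=.
- by move=> b' [].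
- move=> _ ->; rewrite zerov_mkvec; apply/Bx_mkvec; rewrite -zerov_mkvec.
  by split=> //; exact: inB_zerov.
- move=> X Y c /Bx_mkvec[cB [cX cY]] /fcr_some[->].
  have [X1 _] := inB_mkvec_ge0 (k := 1) cB n_gt0.
  rewrite f_raw0_up ?cY // => c'B; apply/Bx_mkvec; split=> //.
  by split=> i hi; [have := cX i | have := cY i]; coord_cases.
move=> X Y /Bx_mkvec[bB [bX bY]].
have b_eq : mkvec n X Y = mkvec n [eta (fun=> 0) with 1%N |-> X 1%N] (fun=> 0).
  by apply: eq_mkvec => i hi; [have := bX i | have := bY i]; coord_cases.
have [X1 _] := inB_mkvec_ge0 (k := 1) bB n_gt0.
have [] := inB_ssum bB; rewrite b_eq ssum_mkvec_updx // -zerov_mkvec ssum_zerov => X1_le X1_even.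
exists (zerov n), (absz (X 1%N) %/ 2)%N; split=> //.
rewrite zerov_mkvec iterf0_up -?zerov_mkvec ?inB_zerov ?ssum_zerov //; last lia.
by congr Some; apply: eq_mkvec => i hi //; coord_cases.
Qed.

Lemma Bset_x_succ a : (1 <= a < n)%N -> (forall b, Bset n l j a b <-> Bx a b) ->
  forall b, Bset n l j a.+1 b <-> Bx a.+1 b.
Proof.
move=> ha IH; apply: Bset_succ IH _ _ _ _; rewrite ?idx_lo /=; try lia.
- by move=> b [].
- by move=> b [bB [bX bY]]; split=> //; split=> // i hi; apply: bX; lia.
- move=> X Y c /Bx_mkvec[cB [cX cY]] /fcr_some[->].
  have [Xa1 _] := inB_mkvec_ge0 (k := a.+1) cB ltac:(lia).
  rewrite f_raw_x ?cY //; [move=> c'B | lia..]; apply/Bx_mkvec; split=> //.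
  by split=> i hi; [have := cX i | have := cY i]; coord_cases.
move=> X Y /Bx_mkvec[bB [bX bY]].
have nonneg k := inB_mkvec_ge0 (k := k) bB.
have := nonneg a; have := nonneg a.+1 => Xa1 Xa.
set b0 := mkvec n [eta X with a.+1 |-> 0, a |-> X a + X a.+1] Y.
have b0B : inB n l b0.
  apply: (inB_mkvec_transfer bB) => [k hk|].
    by have := nonneg k hk; coord_cases.
  by rewrite !ssum_mkvec_updx /=; coord_cases.
exists b0, (absz (X a.+1)); split.
  by apply/Bx_mkvec; split=> //; split=> i hi; [have := bX i | have := bY i]; coord_cases.
rewrite iterf_x //; [|coord_cases|have := bY a.+1; coord_cases].
by congr Some; apply: eq_mkvec => k hk //; coord_cases.
Qed.

Lemma Bset_x a : (1 <= a <= n)%N -> forall b, Bset n l j a b <-> Bx a b.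
Proof.
elim: a => [|[|a] IH] // ha; first exact: Bset_one.
by apply: Bset_x_succ; [lia | apply: IH; lia].
Qed.

Lemma Bset_xb_one b : Bset n l j n.+1 b <-> Bxb 1 b.
Proof.
move: b; apply: (Bset_succ (P := Bx n)); rewrite ?idx_lo /= ?leqnn //; first by apply: Bset_x; lia.
- by move=> b' [].
- by move=> b' [bB [_ bY]]; split=> // i hi; apply: bY; lia.
- move=> X Y c /Bxb_mkvec[cB cY] /fcr_some[->].
  rewrite f_raw_n // => c'B; apply/Bxb_mkvec; split=> // i hi.
  by have := cY i; coord_cases.
move=> X Y /Bxb_mkvec[bB bY].
have nonneg k := inB_mkvec_ge0 (k := k) bB.
set b0 := mkvec n [eta X with n |-> X n + Y n] [eta Y with n |-> 0].
have b0B : inB n l b0.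
  apply: (inB_mkvec_transfer bB) => [k hk|].
    by have := nonneg k hk; coord_cases.
  by rewrite ssum_mkvec_updx ?ssum_mkvec_updxb /=; coord_cases.
exists b0, (absz (Y n)); split.
  by apply/Bx_mkvec; split=> //; split=> i hi; [lia | have := bY i; coord_cases].
have [Xn Yn] := nonneg n ltac:(lia).
rewrite iterf_n //; last by coord_cases.
by congr Some; apply: eq_mkvec => k hk //; coord_cases.
Qed.

Lemma Bset_xb_succ a : (1 <= a < n)%N -> (forall b, Bset n l j (n + a) b <-> Bxb a b) ->
  forall b, Bset n l j (n + a).+1 b <-> Bxb a.+1 b.
Proof.
move=> ha IH; have idx_i : idx n j (n + a).+1 = (n - a)%N by rewrite idx_hi; lia.
have hi : (1 <= n - a < n)%N by lia.
apply: Bset_succ IH _ _ _ _; rewrite ?idx_i.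
- by move=> b [].
- by move=> b [bB bY]; split=> // k hk; apply: bY; lia.
- move=> X Y c /Bxb_mkvec[cB cY] /fcr_some[->].
  case: (lerP (Y (n - a).+1) (X (n - a).+1)) => [hx | hxb];
    [rewrite f_raw_x | rewrite f_raw_xb] => // c'B; apply/Bxb_mkvec; split=> // k hk;
    by have := cY k; coord_cases.
move=> X Y /Bxb_mkvec[bB bY].
move Ei: (n - a)%N hi => i hi.
have nonneg k := inB_mkvec_ge0 (k := k) bB.
have [[Xi Yi] [Xi1 Yi1]] := (nonneg i ltac:(lia), nonneg i.+1 ltac:(lia)).
have [r r_def] : exists r : nat, r%:Z = Num.max (X i.+1 - Y i.+1) 0.
  by exists (absz (Num.max (X i.+1 - Y i.+1) 0)); lia.
(* [b0] collects xbar_i into xbar_(i+1) and the excess max(x_(i+1) - xbar_(i+1), 0) into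
   x_i; f_i first returns xbar_i (barred branch), then the excess (unbarred branch). *)
set b0 := mkvec n [eta X with i.+1 |-> X i.+1 - r%:Z, i |-> X i + r%:Z]
                  [eta Y with i.+1 |-> Y i.+1 + Y i, i |-> 0].
have b0B : inB n l b0.
  apply: (inB_mkvec_transfer bB) => [k hk|].
    by have := nonneg k hk; coord_cases.
  by rewrite !ssum_mkvec_updx ?ssum_mkvec_updxb /=; coord_cases.
exists b0, (r + absz (Y i))%N; split.
  by apply/Bxb_mkvec; split=> // k hk; have := bY k; coord_cases.
have E1 := @iterf_xb n l n_gt0 i _ _ (absz (Y i)) hi b0B.
rewrite iterfD E1 /=; last by coord_cases.
rewrite iterf_x //; last 3 first.
- by apply: iterf_inB b0B (E1 _); coord_cases.
- by coord_cases.
- by coord_cases.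
by congr Some; apply: eq_mkvec => k hk //; coord_cases.
Qed.

Lemma Bset_xb a : (1 <= a <= n)%N -> forall b, Bset n l j (n + a) b <-> Bxb a b.
Proof.
elim: a => [|[|a] IH] // ha; first by rewrite addn1; exact: Bset_xb_one.
by rewrite addnS; apply: Bset_xb_succ; [lia | apply: IH; lia].
Qed.

Lemma Bset_full b : Bset n l j (2 * n) b <-> inB n l b.
Proof.
rewrite (_ : (2 * n = n + n)%N) ?Bset_xb; try lia.
by split=> [[]|bB] //; split=> // i; lia.
Qed.

End BSets.

Section ExtremalPath.

Variables n l j : nat.
Hypothesis n_gt0 : (0 < n)%N.

Definition xvec a := mkvec n [eta (fun=> 0) with a |-> 2 * l%:Z] (fun=> 0).

Definition xbvec a := mkvec n (fun=> 0) [eta (fun=> 0) with a |-> 2 * l%:Z].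

Lemma inB_xvec a : (1 <= a <= n)%N -> inB n l (xvec a).
Proof.
move=> ha; apply/inB_mkvec; rewrite ssum_mkvec_updx // -zerov_mkvec ssum_zerov.
by split=> [k hk|/=|/=]; [coord_cases | lia | lia].
Qed.

Lemma inB_xbvec a : (1 <= a <= n)%N -> inB n l (xbvec a).
Proof.
move=> ha; apply/inB_mkvec; rewrite ssum_mkvec_updxb // -zerov_mkvec ssum_zerov.
by split=> [k hk|/=|/=]; [coord_cases | lia | lia].
Qed.

Lemma xvec_eps_phi a : (1 <= a <= n)%N ->
  eps n l a (xvec a) = 0 /\ phi n l a (xvec a) = 2 * l%:Z.
Proof.
move=> ha; rewrite /eps /phi /pos ifN; last lia.
case: ltnP => a_n; rewrite !getx_mkvec ?getxb_mkvec /=; try lia; coord_cases.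
Qed.

Lemma xbvec_eps_phi a : (a < n)%N ->
  eps n l a (xbvec a.+1) = 0 /\ phi n l a (xbvec a.+1) = 2 * l%:Z.
Proof.
move=> ha; rewrite /eps /phi /pos; case: eqP => [-> | a_gt0].
  by rewrite ssum_mkvec_updxb // -zerov_mkvec ssum_zerov !getx_mkvec ?getxb_mkvec //=; lia.
by rewrite ha !getx_mkvec ?getxb_mkvec /=; try lia; coord_cases.
Qed.

Lemma bseqcS a : bseqc n l j a.+1 =
  obind (fun b => iterf n l (idx n j a.+1) (absz (phi n l (idx n j a.+1) b)) b) (bseqc n l j a).
Proof. by []. Qed.

Lemma eps_phi_zerov : eps n l 0 (zerov n) = l%:Z /\ phi n l 0 (zerov n) = l%:Z.
Proof. by rewrite /eps /phi /= ssum_zerov zerov_mkvec !getx_mkvec ?getxb_mkvec /pos //; lia. Qed.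

Lemma bseqc_x a : (1 <= a <= n)%N -> bseqc n l j a = Some (xvec a).
Proof.
elim: a => [|[|a] IH] // ha.
  have [_ phi0] := eps_phi_zerov.
  by rewrite /= idx_lo //= phi0 zerov_mkvec iterf0_up -?zerov_mkvec ?inB_zerov ?ssum_zerov //=; lia.
rewrite bseqcS IH /= ?idx_lo /=; try lia.
have [_ ->] := xvec_eps_phi (ltac:(lia) : (1 <= a.+1 <= n)%N).
rewrite iterf_x ?inB_xvec; try by [lia | coord_cases].
by congr Some; apply: eq_mkvec => k hk //; coord_cases.
Qed.

Lemma bseqc_xb a : (1 <= a <= n)%N -> bseqc n l j (n + a) = Some (xbvec (n - a).+1).
Proof.
elim: a => [|[|a] IH] // ha.
  rewrite addn1 bseqcS bseqc_x /= ?idx_lo //; try lia.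
  have [_ ->] := xvec_eps_phi (ltac:(lia) : (1 <= n <= n)%N).
  rewrite iterf_n ?inB_xvec; try by [lia | coord_cases].
  by congr Some; apply: eq_mkvec => k hk //; coord_cases.
rewrite addnS bseqcS IH /= ?idx_hi; try lia.
have -> : ((2 * n).+1 - (n + a.+1).+1)%N = (n - a.+1)%N by lia.
have [_ ->] := xbvec_eps_phi (ltac:(lia) : (n - a.+1 < n)%N).
rewrite iterf_xb ?inB_xbvec; try by [lia | coord_cases].
by congr Some; apply: eq_mkvec => k hk //; coord_cases.
Qed.

Lemma xvec_eq a : (1 <= a <= n)%N ->
  xvec a = (set_nth 0 (nseq n 0) a.-1 (2 * l%:Z), nseq n 0).
Proof.
by move=> ha; rewrite /xvec /mkvec -(upd1_mkseq (fun=> 0)) // mkseq0.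
Qed.

Lemma xbvec_eq a : (1 <= a <= n)%N ->
  xbvec a = (nseq n 0, set_nth 0 (nseq n 0) a.-1 (2 * l%:Z)).
Proof.
by move=> ha; rewrite /xbvec /mkvec -(upd1_mkseq (fun=> 0)) // mkseq0.
Qed.

Lemma iterf0_xbvec : iterf n l 0 l (xbvec 1) = Some (zerov n).
Proof.
rewrite iterf0_down ?inB_xbvec; try by [lia | coord_cases].
by rewrite zerov_mkvec; congr Some; apply: eq_mkvec => k hk //; coord_cases.
Qed.

Lemma Bset_inB a b : Bset n l j a b -> inB n l b.
Proof.
elim: a b => [|a IH] b /=; first by move->; exact: inB_zerov.
by case=> b0 [k [/IH b0B]]; apply: iterf_inB.
Qed.

Lemma eps_ge0 i b : inB n l b -> (1 <= i <= n)%N -> 0 <= eps n l i b.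
Proof.
move=> bB hi; have [_ Yi] := inB_ge0 bB hi; rewrite /eps /pos ifN; last lia.
by case: ltnP => hin; [lia | rewrite (_ : n = i) //; lia].
Qed.

Lemma bseqc_extremal a : (0 < l)%N -> (1 <= a <= 2 * n)%N ->
  let i := if (a < 2 * n)%N then idx n j a.+1 else idx n j.+1 1 in
  exists b, bseqc n l j a = Some b /\ eps n l i b = 0 /\ 0 < phi n l i b.
Proof.
move=> l_gt0 ha i; rewrite {}/i.
case: (leqP a n) => a_n.
  exists (xvec a); rewrite bseqc_x; last lia.
  rewrite ifT ?idx_lo /=; try lia.
  by have [-> ->] := xvec_eps_phi (ltac:(lia) : (1 <= a <= n)%N); split=> //; lia.
move Ea': (a - n)%N => a'; have -> : a = (n + a')%N by lia.
exists (xbvec (n - a').+1); rewrite bseqc_xb; last lia.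
have -> : (if (n + a' < 2 * n)%N then idx n j (n + a').+1 else idx n j.+1 1) = (n - a')%N.
  by case: ltnP => ?; [rewrite idx_hi | rewrite idx_lo]; lia.
by have [-> ->] := xbvec_eps_phi (ltac:(lia) : (n - a' < n)%N); split=> //; lia.
Qed.

Lemma lam_h_le_eps a : (1 <= a <= 2 * n)%N -> forall b, Bset n l j a.-1 b ->
  (lam_h l j (idx n j a))%:Z <= eps n l (idx n j a) b.
Proof.
case: a => [//|[|a]] ha b.
  by move=> /= ->; rewrite idx_lo //; have [-> _] := eps_phi_zerov.
have hi : (1 <= idx n j a.+2 <= n)%N by rewrite /idx; case: ifP; lia.
by move/Bset_inB => bB; rewrite /lam_h ifN; [exact: eps_ge0 | lia].
Qed.

Lemma bseqc_next : bseqc n l j.+1 0 =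
  obind (iterf n l (idx n j.+1 1) (lam_h l j.+1 (idx n j.+1 1))) (bseqc n l j (2 * n)).
Proof.
rewrite idx_lo //= (_ : (2 * n = n + n)%N) ?bseqc_xb; try lia.
by rewrite subnn /lam_h /= iterf0_xbvec.
Qed.

End ExtremalPath.

Unset Implicit Arguments.

Theorem mainTheorem8 (n l : nat) (hn : (2 <= n)%N) (hl : (1 <= l)%N) :
  let d := (2 * n)%N in
  (* (II) *)
  (forall j : nat, (1 <= j)%N -> forall b : vec, Bset n l j d b <-> inB n l b) /\
  (* (III) *)
  (forall j a : nat, (1 <= j)%N -> (1 <= a <= d)%N -> forall b : vec,
      Bset n l j a.-1 b -> (lam_h l j (idx n j a))%:Z <= eps n l (idx n j a) b) /\
  (* (IV') *)
  (forall j a : nat, (1 <= j)%N -> (1 <= a <= d)%N ->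
      let inext := if (a < d)%N then idx n j a.+1 else idx n j.+1 1 in
      exists b : vec, bseqc n l j a = Some b /\
        eps n l inext b = 0 /\ 0 < phi n l inext b) /\
  (forall j : nat, (1 <= j)%N ->
      bseqc n l j.+1 0 =
      obind (iterf n l (idx n j.+1 1) (lam_h l j.+1 (idx n j.+1 1))) (bseqc n l j d)) /\
  (* explicit descriptions of B^(j)_a *)
  (forall j : nat, (1 <= j)%N -> forall b : vec, Bset n l j 0 b <-> b = zerov n) /\
  (forall j a : nat, (1 <= j)%N -> (1 <= a <= n)%N -> forall b : vec,
      Bset n l j a b <->
      (inB n l b /\ (forall i : nat, (a < i <= n)%N -> getx b i = 0)
                 /\ (forall i : nat, (1 <= i <= n)%N -> getxb b i = 0))) /\
  (forall j a : nat, (1 <= j)%N -> (1 <= a <= n.-1)%N -> forall b : vec,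
      Bset n l j (n + a) b <->
      (inB n l b /\ (forall i : nat, (1 <= i <= n - a)%N -> getxb b i = 0))) /\
  (* explicit descriptions of b^(j)_a *)
  (forall j : nat, (1 <= j)%N -> bseqc n l j 0 = Some (zerov n)) /\
  (forall j a : nat, (1 <= j)%N -> (1 <= a <= n)%N ->
      bseqc n l j a = Some (set_nth 0 (nseq n 0) a.-1 (2 * l%:Z), nseq n 0)) /\
  (forall j a : nat, (1 <= j)%N -> (1 <= a <= n)%N ->
      bseqc n l j (n + a) = Some (nseq n 0, set_nth 0 (nseq n 0) (n - a) (2 * l%:Z))).
Proof.
move=> d; rewrite {}/d; have n_gt0 : (0 < n)%N by lia.
split; first by move=> j _; exact: Bset_full.
split; first by move=> j a _; exact: lam_h_le_eps.
split; first by move=> j a _; exact: bseqc_extremal.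
split; first by move=> j _; exact: bseqc_next.
split; first by [].
split; first by move=> j a _; exact: Bset_x.
split; first by move=> j a _ ha; apply: Bset_xb; lia.
split; first by [].
split; first by move=> j a _ ha; rewrite bseqc_x // xvec_eq.
by move=> j a _ ha; rewrite bseqc_xb // xbvec_eq //; lia.
Qed.
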